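(* Let $\theta\in\mathrm{Irr}(N)$. Then $K_{\tilde\theta}=\mathrm{Stab}_G(\theta)$ is a normal subgroup of $L_{\tilde\theta}=\mathrm{Stab}_G(\tilde\theta)$.
   Context: $G$ is a profinite group and $N$ is an open normal subgroup of $G$. $\mathrm{Irr}(H)$ denotes the continuous irreducible complex characters of $H$ and $\mathrm{Lin}(H)$ the continuous degree-one characters. For $H\le G$, $\lambda,\delta\in\mathrm{Irr}(H)$ are $G$-twist equivalent if $\lambda=\delta\,\psi|_H$ for some $\psi\in\mathrm{Lin}(G)$; $\tilde\theta$ denotes the $G$-twist class of $\theta$. $G$ acts on $\mathrm{Irr}(N)$ by ${}^g\theta(n)=\theta(g^{-1}ng)$, and this induces an action $g\cdot\tilde\theta=\widetilde{{}^g\theta}$ on $G$-twist classes of $\mathrm{Irr}(N)$. $K_{\tilde\theta}=\mathrm{Stab}_G(\theta)$ (which depends only on $\tilde\theta$) and $L_{\tilde\theta}=\mathrm{Stab}_G(\tilde\theta)$. *)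

From HB Require Import structures.
From mathcomp Require Import all_boot all_order all_algebra all_field.
From mathcomp Require Import boolp classical_sets topology.
Set Implicit Arguments. Unset Strict Implicit. Unset Printing Implicit Defensive.
Import GRing.Theory.
Local Open Scope classical_set_scope.
Local Open Scope ring_scope.

Definition group_axioms (T : Type) (mul : T -> T -> T) (inv : T -> T) (one : T) : Prop :=
  [/\ forall x y z, mul x (mul y z) = mul (mul x y) z,
      forall x, mul one x = x, forall x, mul x one = x,
      forall x, mul (inv x) x = one & forall x, mul x (inv x) = one].

Definition profinite_group (T : topologicalType) (mul : T -> T -> T) (inv : T -> T) (one : T) : Prop :=
  [/\ group_axioms mul inv one,
      continuous (fun p : T * T => mul p.1 p.2),
      continuous inv &
      [/\ compact [set: T], hausdorff_space T & totally_disconnected [set: T]]].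

Definition is_subgroup (T : Type) (mul : T -> T -> T) (inv : T -> T) (one : T) (H : set T) : Prop :=
  [/\ H one, forall x y, H x -> H y -> H (mul x y) & forall x, H x -> H (inv x)].

Definition is_normal_subgroup_of (T : Type) (mul : T -> T -> T) (inv : T -> T) (one : T) (H L : set T) : Prop :=
  [/\ is_subgroup mul inv one H, is_subgroup mul inv one L, H `<=` L &
      forall g h, L g -> H h -> H (mul (mul g h) (inv g))].

(* A continuous complex representation of degree n of the subgroup H:
   a homomorphism H -> GL_n(C) which is continuous; for (the open subgroups of)
   a profinite group this is the same as having an open kernel. *)
Definition cont_rep (T : topologicalType) (mul : T -> T -> T) (one : T) (H : set T)
  (n : nat) (rho : T -> 'M[algC]_n) : Prop :=
  [/\ rho one = 1%:M,
      forall x y, H x -> H y -> rho (mul x y) = rho x *m rho y &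
      open [set x | H x /\ rho x = 1%:M]].

Definition irr_rep (T : Type) (H : set T) (n : nat) (rho : T -> 'M[algC]_n) : Prop :=
  (0 < n)%N /\
  forall U : 'M[algC]_n, (forall x, H x -> (U *m rho x <= U)%MS) ->
    (U == (0 : 'M[algC]_n))%MS \/ (U == (1%:M : 'M[algC]_n))%MS.

Definition is_Irr (T : topologicalType) (mul : T -> T -> T) (one : T) (H : set T)
  (theta : T -> algC) : Prop :=
  exists n (rho : T -> 'M[algC]_n),
    [/\ cont_rep mul one H rho, irr_rep H rho & forall x, H x -> theta x = \tr (rho x)].

Definition is_Lin (T : topologicalType) (mul : T -> T -> T) (one : T) (H : set T)
  (psi : T -> algC) : Prop :=
  exists rho : T -> 'M[algC]_1,
    cont_rep mul one H rho /\ forall x, H x -> psi x = \tr (rho x).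

Definition twist_equiv (T : topologicalType) (mul : T -> T -> T) (one : T) (H : set T)
  (lam del : T -> algC) : Prop :=
  exists psi, is_Lin mul one [set: T] psi /\ forall x, H x -> lam x = del x * psi x.

Definition conj_char (T : Type) (mul : T -> T -> T) (inv : T -> T)
  (g : T) (theta : T -> algC) : T -> algC :=
  fun n => theta (mul (mul (inv g) n) g).

Definition stab_char (T : Type) (mul : T -> T -> T) (inv : T -> T) (N : set T)
  (theta : T -> algC) : set T :=
  [set g | forall n, N n -> conj_char mul inv g theta n = theta n].

(* L_{~theta} = Stab_G(~theta): g . ~theta = ~theta, i.e. ^g theta is
   G-twist equivalent to theta. *)
Definition stab_twist_class (T : topologicalType) (mul : T -> T -> T) (inv : T -> T) (one : T)
  (N : set T) (theta : T -> algC) : set T :=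
  [set g | twist_equiv mul one N (conj_char mul inv g theta) theta].

From HB Require Import structures.
From mathcomp Require Import all_boot all_order all_algebra all_field.
From mathcomp Require Import boolp classical_sets topology.
Set Implicit Arguments. Unset Strict Implicit. Unset Printing Implicit Defensive.
Set Warnings "-notation-overridden -ambiguous-paths".
Import GRing.Theory.
Local Open Scope classical_set_scope.
Local Open Scope ring_scope.

(* Continuous linear characters of G form a group under pointwise product and
   are constant on conjugacy classes.  Hence L, the set of g with
   ^g theta = theta * psi on N for some such psi, is a subgroup containing K.
   For g in L, h in K and n in N, write ^(g^-1) theta = theta * psi'; then
   conjugating n by g h g^-1 multiplies theta by psi' at a conjugate of n,
   h contributes nothing, and undoing the conjugation by g^-1 divides it out
   again. *)

Lemma trace_scalar_mx11 (a : algC) : \tr (a%:M : 'M_1) = a.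
Proof. by rewrite mxtrace_scalar. Qed.

Lemma scalar_mx11_inj (a b : algC) : (a%:M : 'M_1) = b%:M -> a = b.
Proof. by move/(congr1 mxtrace); rewrite !trace_scalar_mx11. Qed.

Section GroupAxioms.

Variables (T : Type) (mul : T -> T -> T) (inv : T -> T) (one : T).
Hypothesis groupT : group_axioms mul inv one.

Lemma gmulA x y z : mul x (mul y z) = mul (mul x y) z.
Proof. by case: groupT. Qed.

Lemma gmul1g x : mul one x = x.
Proof. by case: groupT. Qed.

Lemma gmulg1 x : mul x one = x.
Proof. by case: groupT. Qed.

Lemma gmulVg x : mul (inv x) x = one.
Proof. by case: groupT. Qed.

Lemma gmulgV x : mul x (inv x) = one.
Proof. by case: groupT. Qed.

Lemma ginv_unique x y : mul x y = one -> y = inv x.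
Proof. by move=> xy; rewrite -[y]gmul1g -(gmulVg x) -gmulA xy gmulg1. Qed.

Lemma ginvK x : inv (inv x) = x.
Proof. by apply/esym/ginv_unique; rewrite gmulVg. Qed.

Lemma ginv1 : inv one = one.
Proof. by apply/esym/ginv_unique; rewrite gmul1g. Qed.

Lemma ginvM x y : inv (mul x y) = mul (inv y) (inv x).
Proof. by apply/esym/ginv_unique; rewrite gmulA -(gmulA x) gmulgV gmulg1 gmulgV. Qed.

Definition gconj g n := mul (mul (inv g) n) g.

Lemma conj_charE g (f : T -> algC) n : conj_char mul inv g f n = f (gconj g n).
Proof. by []. Qed.

Lemma gconj1g n : gconj one n = n.
Proof. by rewrite /gconj ginv1 gmul1g gmulg1. Qed.

Lemma gconjM g h n : gconj (mul g h) n = gconj h (gconj g n).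
Proof. by rewrite /gconj ginvM !gmulA. Qed.

Lemma gconjK g n : gconj (inv g) (gconj g n) = n.
Proof. by rewrite /gconj ginvK -!gmulA gmulgV gmulg1 !gmulA gmulgV gmul1g. Qed.

Lemma gconjVK g n : gconj g (gconj (inv g) n) = n.
Proof. by rewrite -{1}(ginvK g) gconjK. Qed.

Lemma gconjVE g h : mul (mul g h) (inv g) = gconj (inv g) h.
Proof. by rewrite /gconj ginvK. Qed.

End GroupAxioms.

Section LinearCharacters.

Variables (T : topologicalType) (mul : T -> T -> T) (inv : T -> T) (one : T).
Hypothesis groupT : group_axioms mul inv one.
Hypothesis mul_cont : continuous (fun p : T * T => mul p.1 p.2).
Hypothesis inv_cont : continuous inv.

Definition lin_char (psi : T -> algC) : Prop :=
  [/\ psi one = 1, forall x y, psi (mul x y) = psi x * psi y &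
      open [set x | psi x = 1]].

Lemma is_LinP psi : is_Lin mul one [set: T] psi <-> lin_char psi.
Proof.
have kerE (rho : T -> 'M_1) : (forall x, rho x = (psi x)%:M) ->
    [set x | [set: T] x /\ rho x = 1%:M] = [set x | psi x = 1].
  move=> rhoE; apply/seteqP; split=> x /=; rewrite rhoE.
    by case=> _ /scalar_mx11_inj.
  by move=> ->.
split.
  case=> rho [[rho1 rhoM rho_open] psiE].
  have rhoE x : rho x = (psi x)%:M by rewrite psiE // trace_mx11 -mx11_scalar.
  split; first by rewrite psiE // rho1 trace_scalar_mx11.
    by move=> x y; rewrite psiE // rhoM // !rhoE -scalar_mxM trace_scalar_mx11.
  by rewrite -(kerE rho).
case=> psi1 psiM psi_open; exists (fun x => (psi x)%:M).
split; last by move=> x _; rewrite trace_scalar_mx11.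
split; first by rewrite psi1.
  by move=> x y _ _; rewrite psiM scalar_mxM.
by rewrite kerE.
Qed.

Lemma lin_char1 : lin_char (fun=> 1).
Proof.
split=> //; first by move=> *; rewrite mulr1.
by rewrite (_ : [set _ | _] = setT); [exact: openT | apply/seteqP].
Qed.

Lemma lin_char_conj psi g x : lin_char psi -> psi (gconj mul inv g x) = psi x.
Proof.
case=> psi1 psiM _.
by rewrite /gconj !psiM mulrAC -psiM (gmulVg groupT) psi1 mul1r.
Qed.

Lemma lin_char_mulV psi x : lin_char psi -> psi x * psi (inv x) = 1.
Proof. by case=> psi1 psiM _; rewrite -psiM (gmulgV groupT). Qed.

Lemma continuous_gmull a : continuous (fun y => mul a y).
Proof.
move=> y; apply: (continuous_comp (f := pair a)) (@mul_cont (a, y)).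
by apply: cvg_pair; [exact: cvg_cst | exact: cvg_id].
Qed.

(* S is the union of the translates x W, x in S, which are open. *)
Lemma open_gmul_stable (S W : set T) :
  open W -> W one -> (forall x y, S x -> W y -> S (mul x y)) -> open S.
Proof.
move=> W_open W1 SW; rewrite openE => x Sx.
have V_open : open (mul (inv x) @^-1` W).
  by apply: open_comp => // y _; exact: continuous_gmull.
have Vx : (mul (inv x) @^-1` W) x by rewrite /= (gmulVg groupT).
apply: filterS (open_nbhs_nbhs (conj V_open Vx)) => y /= Wy.
by rewrite -[y](gmul1g groupT) -(gmulgV groupT x) -(gmulA groupT); exact: SW.
Qed.

Lemma lin_charM p q : lin_char p -> lin_char q -> lin_char (fun x => p x * q x).
Proof.
move=> [p1 pM p_open] [q1 qM q_open]; split.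
- by rewrite p1 q1 mulr1.
- by move=> x y; rewrite pM qM mulrACA.
- apply: (open_gmul_stable (W := [set x | p x = 1] `&` [set x | q x = 1])).
  + exact: openI.
  + by split.
  + by move=> x y /= pqx [py qy]; rewrite pM qM py qy !mulr1.
Qed.

Lemma lin_charV psi : lin_char psi -> lin_char (fun x => psi (inv x)).
Proof.
move=> [psi1 psiM psi_open]; split.
- by rewrite (ginv1 groupT).
- by move=> x y; rewrite (ginvM groupT) psiM mulrC.
- rewrite (_ : [set _ | _] = inv @^-1` [set x | psi x = 1]) //.
  by apply: open_comp => // x _; exact: inv_cont.
Qed.

End LinearCharacters.

Section Stabilisers.

Variables (T : topologicalType) (mul : T -> T -> T) (inv : T -> T) (one : T).
Hypothesis groupT : group_axioms mul inv one.
Hypothesis mul_cont : continuous (fun p : T * T => mul p.1 p.2).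
Hypothesis inv_cont : continuous inv.
Variables (N : set T) (theta : T -> algC).
Hypothesis N_normal : forall g n, N n -> N (mul (mul g n) (inv g)).

Local Notation K := (stab_char mul inv N theta).
Local Notation L := (stab_twist_class mul inv one N theta).
Local Notation gconj := (gconj mul inv).

Lemma gconj_normal g n : N n -> N (gconj g n).
Proof. by move/(N_normal (inv g)); rewrite (gconjVE groupT) ?(ginvK groupT). Qed.

Lemma stab_twist_classP g : L g <->
  exists2 psi, lin_char mul one psi & forall n, N n -> theta (gconj g n) = theta n * psi n.
Proof.
split; case=> psi.
  by case=> /is_LinP psi_lin thetaE; exists psi.
by move=> /is_LinP psi_lin thetaE; exists psi.
Qed.

Lemma stab_char_subgroup : is_subgroup mul inv one K.
Proof.
split.
- by move=> n Nn; rewrite conj_charE (gconj1g groupT).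
- move=> g h Kg Kh n Nn.
  rewrite conj_charE (gconjM groupT) -conj_charE Kh; last exact: gconj_normal.
  exact: Kg n Nn.
- move=> g Kg n Nn; rewrite conj_charE.
  have := Kg _ (gconj_normal (inv g) Nn).
  by rewrite conj_charE (gconjVK groupT) => ->.
Qed.

Lemma stab_twist_class_subgroup : is_subgroup mul inv one L.
Proof.
split.
- apply/stab_twist_classP; exists (fun=> 1); first exact: lin_char1.
  by move=> n _; rewrite (gconj1g groupT) mulr1.
- move=> g h /stab_twist_classP[p p_lin thetaEg] /stab_twist_classP[q q_lin thetaEh].
  apply/stab_twist_classP; exists (fun x => p x * q x).
    exact (lin_charM groupT mul_cont p_lin q_lin).
  move=> n Nn; rewrite (gconjM groupT) thetaEh; last exact: gconj_normal.
  by rewrite thetaEg // (lin_char_conj groupT _ _ q_lin) mulrA.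
- move=> g /stab_twist_classP[p p_lin thetaEg].
  apply/stab_twist_classP; exists (fun x => p (inv x)).
    exact (lin_charV groupT inv_cont p_lin).
  move=> n Nn; have := thetaEg _ (gconj_normal (inv g) Nn).
  rewrite (gconjVK groupT) (lin_char_conj groupT _ _ p_lin) => ->.
  by rewrite -mulrA (lin_char_mulV groupT _ p_lin) mulr1.
Qed.

Lemma stab_char_sub_twist_class g : K g -> L g.
Proof.
move=> Kg; apply/stab_twist_classP; exists (fun=> 1); first exact: lin_char1.
by move=> n Nn; rewrite -conj_charE Kg // mulr1.
Qed.

Lemma stab_twist_class_normalises_stab_char g h :
  L g -> K h -> K (mul (mul g h) (inv g)).
Proof.
move=> Lg Kh n Nn.
rewrite (gconjVE groupT) conj_charE !(gconjM groupT) (ginvK groupT).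
have [_ _ LV] := stab_twist_class_subgroup.
have /stab_twist_classP[p p_lin thetaE] := LV g Lg.
have Ngn : N (gconj g n) by exact: gconj_normal.
have Kh_gn : theta (gconj h (gconj g n)) = theta (gconj g n) := Kh _ Ngn.
rewrite thetaE; last exact: gconj_normal.
by rewrite (lin_char_conj groupT _ _ p_lin) Kh_gn -(thetaE _ Ngn) (gconjK groupT).
Qed.

End Stabilisers.

Theorem lemma2p3 (T : topologicalType) (mul : T -> T -> T) (inv : T -> T) (one : T)
  (N : set T) (theta : T -> algC) :
  profinite_group mul inv one ->
  is_subgroup mul inv one N -> open N ->
  (forall g n, N n -> N (mul (mul g n) (inv g))) ->
  is_Irr mul one N theta ->
  is_normal_subgroup_of mul inv one (stab_char mul inv N theta)
    (stab_twist_class mul inv one N theta).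
Proof.
move=> [groupT mul_cont inv_cont _] _ _ N_normal _; split.
- exact (stab_char_subgroup groupT theta N_normal).
- exact (stab_twist_class_subgroup groupT mul_cont inv_cont theta N_normal).
- exact (@stab_char_sub_twist_class T mul inv one N theta).
- exact (stab_twist_class_normalises_stab_char groupT mul_cont inv_cont N_normal).
Qed.
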